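(* Let $\mathscr{A}=\{A_1,\ldots,A_r\}$ be an irreducible set of real $d\times d$ matrices, $\|\cdot\|$ a norm on $\mathbb{R}^d$, $p\ge d-1$ and $n\ge1$ integers, and $\mu>1$. Suppose that for some $A_{i_1},\ldots,A_{i_n}\in\mathscr{A}$ and some nonzero $x_*\in\mathbb{R}^d$, \[ \|A_{i_n}\cdots A_{i_1}x_*\|\ge \mu\,\eta_p(\mathscr{A})\,\rho(\mathscr{A})^n\,\|x_*\|,\qquad \eta_p(\mathscr{A})=\frac{\max\{1,\rho(\mathscr{A})^p\}}{\chi_p(\mathscr{A})}. \] Then for every nonzero $x\in\mathbb{R}^d$ there is $F_x\in\mathscr{A}_\infty$ with $n\le \mathrm{len}(F_x)\le n+p$ and \[ \|F_x x\|\ge \big(\eta\,\rho(\mathscr{A})\big)^{\mathrm{len}(F_x)}\|x\|,\qquad\text{where }\eta=\mu^{1/(n+p)}>1. \]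
   Context: Irreducible: the matrices in $\mathscr{A}$ have no common invariant subspace other than $\{0\}$ and $\mathbb{R}^d$. $\mathscr{A}^k$ is the set of products of $k$ matrices from $\mathscr{A}$, $\mathscr{A}^0=\{I\}$; matrices carry the induced operator norm, $\|\mathscr{A}^n\|=\max_{A\in\mathscr{A}^n}\|A\|$, and $\rho(\mathscr{A})=\limsup_{n\to\infty}\|\mathscr{A}^n\|^{1/n}$ is the joint spectral radius. $\mathscr{A}_\infty=\bigcup_{k\ge1}\mathscr{A}^k$, elements regarded as products of factors from $\mathscr{A}$ whose number of factors is the length $\mathrm{len}$. $\mathscr{A}_p=\bigcup_{k=0}^p\mathscr{A}^k$, $\mathscr{A}_p(x)=\{Ax:A\in\mathscr{A}_p\}$, $\mathbf{S}(t)$ the closed $\|\cdot\|$-ball of radius $t$ about $0$, and $\chi_p(\mathscr{A})=\inf_{\|x\|=1}\sup\{t\ge0:\mathbf{S}(t)\subseteq\mathrm{conv}(\mathscr{A}_p(x)\cup\mathscr{A}_p(-x))\}$ is the $p$-measure of irreducibility. *)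

From Stdlib Require Import Reals Lra Lia List Classical ClassicalEpsilon.
Open Scope R_scope.

(* Vectors of R^d are represented as functions nat -> R vanishing at indices >= d;
   d x d matrices as functions nat -> nat -> R (only entries i,j < d are used). *)
Definition Vec := nat -> R.
Definition Mat := nat -> nat -> R.

Definition inRd (d : nat) (x : Vec) : Prop := forall i, (d <= i)%nat -> x i = 0.
Definition vzero (x : Vec) : Prop := forall i, x i = 0.

Fixpoint sumR (k : nat) (f : nat -> R) : R :=
  match k with O => 0 | S k' => sumR k' f + f k' end.

Definition mv (d : nat) (A : Mat) (x : Vec) : Vec :=
  fun i => if Nat.ltb i d then sumR d (fun j => A i j * x j) else 0.

(* the product A_{i_n} ... A_{i_1} applied to x, for the word w = [A_{i_1}; ...; A_{i_n}] *)
Definition applyw (d : nat) (w : list Mat) (x : Vec) : Vec :=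
  fold_left (fun v A => mv d A v) w x.

Definition word_of (As : list Mat) (w : list Mat) : Prop := forall A, In A w -> In A As.

Definition is_norm (d : nat) (N : Vec -> R) : Prop :=
  (forall x, inRd d x -> 0 <= N x) /\
  (forall x, inRd d x -> N x = 0 -> vzero x) /\
  (forall c x, inRd d x -> N (fun i => c * x i) = Rabs c * N x) /\
  (forall x y, inRd d x -> inRd d y -> N (fun i => x i + y i) <= N x + N y).

Definition subspace (d : nat) (V : Vec -> Prop) : Prop :=
  (forall x, V x -> inRd d x) /\ V (fun _ => 0) /\
  (forall x y, V x -> V y -> V (fun i => x i + y i)) /\
  (forall c x, V x -> V (fun i => c * x i)).

Definition irreducible (d : nat) (As : list Mat) : Prop :=
  forall V, subspace d V ->
    (forall A x, In A As -> V x -> V (mv d A x)) ->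
    (forall x, V x -> vzero x) \/ (forall x, inRd d x -> V x).

(* supremum / infimum of a set of reals (0 if empty or unbounded) *)
Definition Rsup (E : R -> Prop) : R :=
  match excluded_middle_informative (bound E /\ exists x, E x) with
  | left H => proj1_sig (completeness E (proj1 H) (proj2 H))
  | right _ => 0
  end.
Definition Rinf (E : R -> Prop) : R := - Rsup (fun x => E (- x)).

Definition limsup (a : nat -> R) : R :=
  Rinf (fun y => exists n, y = Rsup (fun z => exists k, (n <= k)%nat /\ z = a k)).

Definition opnorm (d : nat) (N : Vec -> R) (f : Vec -> Vec) : R :=
  Rsup (fun t => exists x, inRd d x /\ N x = 1 /\ t = N (f x)).

Definition setnorm (d : nat) (N : Vec -> R) (As : list Mat) (k : nat) : R :=
  Rsup (fun t => exists w, word_of As w /\ length w = k /\ t = opnorm d N (applyw d w)).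

Definition rootn (a : R) (n : nat) : R :=
  if Req_EM_T a 0 then 0 else Rpower a (/ INR n).

Definition jsr (d : nat) (N : Vec -> R) (As : list Mat) : R :=
  limsup (fun n => rootn (setnorm d N As n) n).

Definition in_conv (P : Vec -> Prop) (y : Vec) : Prop :=
  exists l : list (R * Vec),
    Forall (fun c => 0 <= fst c /\ P (snd c)) l /\
    fold_right (fun c s => fst c + s) 0 l = 1 /\
    forall i, y i = fold_right (fun c s => fst c * snd c i + s) 0 l.

Definition orbit_pm (d : nat) (As : list Mat) (p : nat) (x : Vec) (z : Vec) : Prop :=
  exists w, word_of As w /\ (length w <= p)%nat /\
    (z = applyw d w x \/ z = applyw d w (fun i => - x i)).

Definition chi (d : nat) (N : Vec -> R) (As : list Mat) (p : nat) : R :=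
  Rinf (fun c => exists x, inRd d x /\ N x = 1 /\
    c = Rsup (fun t => 0 <= t /\
          forall y, inRd d y -> N y <= t -> in_conv (orbit_pm d As p x) y)).

Definition eta_p (d : nat) (N : Vec -> R) (As : list Mat) (p : nat) : R :=
  Rmax 1 (jsr d N As ^ p) / chi d N As p.

From Stdlib Require Import Reals Lra Lia List Classical ClassicalEpsilon FunctionalExtensionality.
Open Scope R_scope.

(* Irreducibility makes the vectors G x, for products G of length
   at most d-1 <= p, span R^d whenever x <> 0; a perturbation of a basis is
   still a basis with controlled coefficients, so conv(A_p(x) U A_p(-x))
   contains a common ball for all x near a unit vector, and compactness of
   the unit sphere (bisection of boxes) gives a radius t0 > 0 valid for all
   unit vectors: chi_p >= t0 > 0.
   For a unit vector u, any t with S(t) in that hull satisfies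
   t N(w xs) <= N(xs) max_G N(w G u), since w maps the hull into the ball
   spanned by the points w G (+-u).  Taking the supremum over t and dividing
   by chi_p > 0 yields G with N(w G u) >= mu max(1, rho^p) rho^n; the word
   F = w G then works for x = N(x) u. *)

Definition vadd (u v : Vec) : Vec := fun i => u i + v i.
Definition vscal (c : R) (u : Vec) : Vec := fun i => c * u i.
Definition v0 : Vec := fun _ => 0.

Ltac vext := apply functional_extensionality; intro; unfold vadd, vscal, v0; try ring.

Lemma opp_vscal (x : Vec) : (fun i => - x i) = vscal (-1) x.
Proof. vext. Qed.

Lemma inRd_vadd d u v : inRd d u -> inRd d v -> inRd d (vadd u v).
Proof. intros H1 H2 i Hi; unfold vadd; rewrite H1, H2; auto; lra. Qed.

Lemma inRd_vscal d c u : inRd d u -> inRd d (vscal c u).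
Proof. intros H1 i Hi; unfold vscal; rewrite H1; auto; lra. Qed.

Lemma inRd_v0 d : inRd d v0.
Proof. intros i _; reflexivity. Qed.

Lemma Rabs_le_inv x a : Rabs x <= a -> -a <= x <= a.
Proof. unfold Rabs; destruct Rcase_abs; intros; lra. Qed.

Lemma sumR_ext k f g : (forall j, (j < k)%nat -> f j = g j) -> sumR k f = sumR k g.
Proof.
  induction k as [|k IH]; simpl; intros H; auto.
  rewrite IH by (intros; apply H; lia). rewrite H by lia. reflexivity.
Qed.

Lemma sumR_plus k f g : sumR k (fun j => f j + g j) = sumR k f + sumR k g.
Proof. induction k; simpl; [lra|]. rewrite IHk; lra. Qed.

Lemma sumR_scal k c f : sumR k (fun j => c * f j) = c * sumR k f.
Proof. induction k; simpl; [lra|]. rewrite IHk; lra. Qed.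

Lemma sumR_const k c : sumR k (fun _ => c) = INR k * c.
Proof. induction k; simpl sumR; [simpl; lra|]. rewrite IHk, S_INR; lra. Qed.

Lemma sumR_zero k f : (forall j, (j < k)%nat -> f j = 0) -> sumR k f = 0.
Proof. intros H. rewrite (sumR_ext k f (fun _ => 0)), sumR_const by auto. lra. Qed.

Lemma sumR_abs k f : Rabs (sumR k f) <= sumR k (fun j => Rabs (f j)).
Proof.
  induction k; simpl; [rewrite Rabs_R0; lra|].
  eapply Rle_trans; [apply Rabs_triang|]. lra.
Qed.

Lemma sumR_le k f g : (forall j, (j < k)%nat -> f j <= g j) -> sumR k f <= sumR k g.
Proof.
  induction k; simpl; intros H; [lra|].
  assert (H1 := H k (Nat.lt_succ_diag_r k)).
  assert (sumR k f <= sumR k g) by (apply IHk; intros; apply H; lia). lra.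
Qed.

Lemma sumR_nonneg k f : (forall j, (j < k)%nat -> 0 <= f j) -> 0 <= sumR k f.
Proof. intros H. rewrite <- (sumR_zero k (fun _ => 0)) by auto. apply sumR_le; auto. Qed.

Lemma sumR_single_le k f i :
  (forall j, (j < k)%nat -> 0 <= f j) -> (i < k)%nat -> f i <= sumR k f.
Proof.
  induction k; intros H Hi; [lia|]. simpl. destruct (Nat.eq_dec i k).
  - subst. pose proof (sumR_nonneg k f ltac:(intros; apply H; lia)). lra.
  - assert (f i <= sumR k f) by (apply IHk; auto; lia). specialize (H k ltac:(lia)). lra.
Qed.

Lemma sumR_delta k (v : nat -> R) j : (j < k)%nat ->
  sumR k (fun i => v i * (if Nat.eqb i j then 1 else 0)) = v j.
Proof.
  induction k as [|k IHk]; intros H; [lia|]. simpl. destruct (Nat.eqb_spec k j).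
  - subst j. rewrite sumR_zero; [lra|].
    intros i Hi. destruct (Nat.eqb_spec i k); [lia|lra].
  - rewrite IHk by lia. lra.
Qed.

Lemma sumR_trunc m k f :
  (k <= m)%nat -> (forall j, (k <= j < m)%nat -> f j = 0) -> sumR m f = sumR k f.
Proof.
  induction m; intros H1 H2; [replace k with 0%nat by lia; auto|].
  destruct (Nat.eq_dec k (S m)); [subst; auto|]. simpl.
  rewrite IHm, H2 by (try lia; intros; apply H2; lia). lra.
Qed.

Definition skip (k0 k : nat) : nat := if Nat.ltb k k0 then k else S k.

Lemma sumR_skip m k0 f :
  (k0 < m)%nat -> sumR m f = sumR (m - 1) (fun k => f (skip k0 k)) + f k0.
Proof.
  induction m; intros H; [lia|]. destruct (Nat.eq_dec k0 m).
  - subst. simpl. replace (m - 0)%nat with m by lia. f_equal. apply sumR_ext. intros j Hj.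
    unfold skip. destruct (Nat.ltb_spec j m); auto; lia.
  - simpl sumR at 1. rewrite IHm by lia. destruct m; [lia|].
    replace (S (S m) - 1)%nat with (S m) by lia. replace (S m - 1)%nat with m by lia.
    simpl sumR. unfold skip at 3. destruct (Nat.ltb_spec m k0); [lia|]. lra.
Qed.

Lemma mv_inRd d A x : inRd d (mv d A x).
Proof. intros i Hi. unfold mv. destruct (Nat.ltb_spec i d); auto; lia. Qed.

Lemma applyw_inRd d w x : inRd d x -> inRd d (applyw d w x).
Proof. unfold applyw. revert x. induction w; simpl; intros x H; auto. apply IHw, mv_inRd. Qed.

Lemma applyw_cons d A w x : applyw d (A :: w) x = applyw d w (mv d A x).
Proof. reflexivity. Qed.

Lemma applyw_app d G w x : applyw d (G ++ w) x = applyw d w (applyw d G x).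
Proof. unfold applyw. apply fold_left_app. Qed.

Lemma mv_add d A u v : mv d A (vadd u v) = vadd (mv d A u) (mv d A v).
Proof.
  vext. unfold mv. destruct (Nat.ltb _ d); [|lra].
  rewrite <- sumR_plus. apply sumR_ext; intros; unfold vadd; lra.
Qed.

Lemma mv_scal d A c u : mv d A (vscal c u) = vscal c (mv d A u).
Proof.
  vext. unfold mv. destruct (Nat.ltb _ d); [|lra].
  rewrite <- sumR_scal. apply sumR_ext; intros; unfold vscal; lra.
Qed.

Lemma mv_0 d A : mv d A v0 = v0.
Proof. vext. unfold mv. destruct (Nat.ltb _ d); auto. apply sumR_zero; intros; unfold v0; lra. Qed.

Lemma applyw_add d w u v : applyw d w (vadd u v) = vadd (applyw d w u) (applyw d w v).
Proof. revert u v; induction w; intros; auto. rewrite !applyw_cons, mv_add; auto. Qed.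

Lemma applyw_scal d w c u : applyw d w (vscal c u) = vscal c (applyw d w u).
Proof. revert u; induction w; intros; auto. rewrite !applyw_cons, mv_scal; auto. Qed.

Lemma applyw_0 d w : applyw d w v0 = v0.
Proof. induction w; auto. rewrite applyw_cons, mv_0; auto. Qed.

Section Norm.
Variables (d : nat) (N : Vec -> R) (HN : is_norm d N).

Lemma N_nonneg x : inRd d x -> 0 <= N x.
Proof. destruct HN as [H _]; auto. Qed.

Lemma N_scal c x : inRd d x -> N (vscal c x) = Rabs c * N x.
Proof. destruct HN as [_ [_ [H _]]]; apply H. Qed.

Lemma N_add x y : inRd d x -> inRd d y -> N (vadd x y) <= N x + N y.
Proof. destruct HN as [_ [_ [_ H]]]; apply H. Qed.

Lemma N_v0 : N v0 = 0.
Proof.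
  replace v0 with (vscal 0 v0) by vext.
  rewrite N_scal by apply inRd_v0. rewrite Rabs_R0; ring.
Qed.

Lemma N_opp x : inRd d x -> N (vscal (-1) x) = N x.
Proof. intros H; rewrite N_scal by auto. rewrite Rabs_left by lra. ring. Qed.

Lemma N_pos x : inRd d x -> ~ vzero x -> 0 < N x.
Proof.
  destruct HN as [_ [Hz _]]. intros H1 H2.
  destruct (N_nonneg x H1); auto. exfalso; apply H2, Hz; auto.
Qed.

Lemma N_rev x y : inRd d x -> inRd d y -> N x <= N y + N (vadd x (vscal (-1) y)).
Proof.
  intros Hx Hy. replace x with (vadd y (vadd x (vscal (-1) y))) at 1 by vext.
  apply N_add; auto. apply inRd_vadd; auto; apply inRd_vscal; auto.
Qed.

Lemma N_normalize x : inRd d x -> ~ vzero x ->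
  inRd d (vscal (/ N x) x) /\ N (vscal (/ N x) x) = 1 /\ x = vscal (N x) (vscal (/ N x) x).
Proof.
  intros Hx Hx0. pose proof (N_pos x Hx Hx0) as Hp. split; [|split].
  - apply inRd_vscal; auto.
  - rewrite N_scal, Rabs_right by (auto; left; apply Rinv_0_lt_compat; auto). field; lra.
  - vext. field; lra.
Qed.
End Norm.

Fixpoint words (As : list Mat) (k : nat) : list (list Mat) :=
  match k with
  | O => nil :: nil
  | S k' => nil :: flat_map (fun A => map (cons A) (words As k')) As
  end.

Lemma words_complete As k G : word_of As G -> (length G <= k)%nat -> In G (words As k).
Proof.
  revert G; induction k; intros G H1 H2.
  - destruct G; simpl in *; auto; lia.
  - destruct G as [|A G]; simpl; auto. right. apply in_flat_map. exists A. split.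
    + apply H1; simpl; auto.
    + apply in_map, IHk; [intros B HB; apply H1; simpl; auto | simpl in H2; lia].
Qed.

Lemma words_sound As k G : In G (words As k) -> word_of As G /\ (length G <= k)%nat.
Proof.
  revert G; induction k; intros G H; simpl in H.
  - destruct H as [<-|[]]. split; simpl; auto. intros A [].
  - destruct H as [<-|H]; [split; simpl; [intros A []|lia]|].
    apply in_flat_map in H. destruct H as [A [HA H]]. apply in_map_iff in H.
    destruct H as [G' [<- HG']]. apply IHk in HG'. destruct HG' as [H1 H2].
    split; simpl; [|lia]. intros B [<-|HB]; auto.
Qed.

Lemma list_max {T} (f : T -> R) (L : list T) : L <> nil ->
  exists G, In G L /\ forall G', In G' L -> f G' <= f G.
Proof.
  induction L as [|a L IH]; intros H; [congruence|]. destruct L as [|b L].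
  - exists a; split; simpl; auto. intros G' [<-|[]]; lra.
  - destruct IH as [G [HG1 HG2]]; [congruence|].
    destruct (Rle_dec (f a) (f G)).
    + exists G; split; [right; auto|]. intros G' [<-|HG']; auto.
    + exists a; split; [left; auto|]. intros G' [<-|HG']; [lra|]. specialize (HG2 G' HG'); lra.
Qed.

Lemma words_max As p (f : list Mat -> R) :
  exists G, word_of As G /\ (length G <= p)%nat /\
    forall G', word_of As G' -> (length G' <= p)%nat -> f G' <= f G.
Proof.
  destruct (list_max f (words As p)) as [G [H1 H2]]; [destruct p; simpl; congruence|].
  apply words_sound in H1. exists G; split; [tauto|split; [tauto|]].
  intros G' A B; apply H2, words_complete; auto.
Qed.

Definition vsum (l : list (R * Vec)) : Vec :=
  fold_right (fun c s => vadd (vscal (fst c) (snd c)) s) v0 l.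

Lemma in_conv_vsum P y : in_conv P y ->
  exists l, Forall (fun c => 0 <= fst c /\ P (snd c)) l /\
    fold_right (fun c s => fst c + s) 0 l = 1 /\ y = vsum l.
Proof.
  intros [l [H1 [H2 H3]]]. exists l; repeat split; auto. vext.
  rewrite H3. clear. induction l; simpl; auto. unfold vadd, vscal; rewrite IHl; auto.
Qed.

Lemma applyw_vsum d w l :
  applyw d w (vsum l) = vsum (map (fun c => (fst c, applyw d w (snd c))) l).
Proof. induction l; simpl; [apply applyw_0|]. rewrite applyw_add, applyw_scal, IHl; auto. Qed.

Lemma vsum_inRd d l : Forall (fun c => inRd d (snd c)) l -> inRd d (vsum l).
Proof. induction 1; simpl; [apply inRd_v0|]. apply inRd_vadd; auto. apply inRd_vscal; auto. Qed.

Lemma N_vsum d N (HN : is_norm d N) l : Forall (fun c => inRd d (snd c)) l ->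
  N (vsum l) <= fold_right (fun c s => Rabs (fst c) * N (snd c) + s) 0 l.
Proof.
  induction 1; simpl; [rewrite (N_v0 d N HN); lra|].
  eapply Rle_trans; [apply (N_add d N HN); [apply inRd_vscal; auto | apply vsum_inRd; auto]|].
  rewrite (N_scal d N HN) by auto. lra.
Qed.

Lemma orbit_inRd d As p x z : inRd d x -> orbit_pm d As p x z -> inRd d z.
Proof.
  intros Hx [G [_ [_ [-> | ->]]]]; apply applyw_inRd; auto.
  rewrite opp_vscal; apply inRd_vscal; auto.
Qed.

Lemma hull_bound d As p N (HN : is_norm d N) x w M : inRd d x ->
  (forall G, word_of As G -> (length G <= p)%nat -> N (applyw d w (applyw d G x)) <= M) ->
  forall y, in_conv (orbit_pm d As p x) y -> N (applyw d w y) <= M.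
Proof.
  intros Hx HM y Hy. destruct (in_conv_vsum _ _ Hy) as [l [H1 [H2 ->]]].
  rewrite applyw_vsum. eapply Rle_trans; [apply (N_vsum d N HN)|].
  { apply Forall_map. eapply Forall_impl; [|exact H1]. intros c [_ Hc]; simpl.
    apply applyw_inRd. eapply orbit_inRd; eauto. }
  rewrite <- (Rmult_1_r M), <- H2. clear H2 Hy.
  induction H1 as [|c l [Hc1 Hc2] Hl IH]; simpl; [lra|].
  assert (HcM : N (applyw d w (snd c)) <= M).
  { destruct Hc2 as [G [HG1 [HG2 [-> | ->]]]]; auto.
    rewrite opp_vscal, applyw_scal, applyw_scal, (N_opp d N HN); auto.
    apply applyw_inRd, applyw_inRd; auto. }
  rewrite Rabs_right by lra. nra.
Qed.

Definition lcomb d (l : list (R * list Mat)) (x : Vec) : Vec :=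
  fold_right (fun c s => vadd (vscal (fst c) (applyw d (snd c) x)) s) v0 l.
Definition sumabs (l : list (R * list Mat)) : R := fold_right (fun c s => Rabs (fst c) + s) 0 l.

Lemma lcomb_app d l1 l2 x : lcomb d (l1 ++ l2) x = vadd (lcomb d l1 x) (lcomb d l2 x).
Proof. induction l1; simpl; [vext|]. rewrite IHl1. vext. Qed.

Lemma lcomb_scal d a l x :
  lcomb d (map (fun c => (a * fst c, snd c)) l) x = vscal a (lcomb d l x).
Proof. induction l; simpl; [vext|]. rewrite IHl. vext. Qed.

Lemma lcomb_addx d l x y : lcomb d l (vadd x y) = vadd (lcomb d l x) (lcomb d l y).
Proof. induction l; simpl; [vext|]. rewrite IHl, applyw_add. vext. Qed.

Lemma lcomb_scalx d l c x : lcomb d l (vscal c x) = vscal c (lcomb d l x).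
Proof. induction l; simpl; [vext|]. rewrite IHl, applyw_scal. vext. Qed.

Lemma applyw_lcomb d w l x :
  applyw d w (lcomb d l x) = lcomb d (map (fun c => (fst c, snd c ++ w)) l) x.
Proof. induction l; simpl; [apply applyw_0|]. rewrite applyw_add, applyw_scal, IHl, applyw_app; auto. Qed.

Lemma lcomb_inRd d l x : inRd d x -> inRd d (lcomb d l x).
Proof.
  intros H; induction l; simpl; [apply inRd_v0|].
  apply inRd_vadd; auto. apply inRd_vscal, applyw_inRd; auto.
Qed.

Lemma sumabs_app l1 l2 : sumabs (l1 ++ l2) = sumabs l1 + sumabs l2.
Proof. induction l1; simpl; try rewrite IHl1; lra. Qed.

Lemma sumabs_scal a l : sumabs (map (fun c => (a * fst c, snd c)) l) = Rabs a * sumabs l.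
Proof. induction l; simpl; [lra|]. rewrite IHl, Rabs_mult; lra. Qed.

Lemma sumabs_nonneg l : 0 <= sumabs l.
Proof. induction l; simpl; [lra|]. pose proof (Rabs_pos (fst a)); lra. Qed.

(* A combination of products of length <= p with total absolute weight <= 1
   lies in conv(A_p(x) U A_p(-x)): negative weights use -x, and the missing
   mass is split evenly between x and -x. *)
Lemma conv_builder d As p x l : inRd d x ->
  Forall (fun c => word_of As (snd c) /\ (length (snd c) <= p)%nat) l -> sumabs l <= 1 ->
  in_conv (orbit_pm d As p x) (lcomb d l x).
Proof.
  intros Hx Hl Hs.
  set (f := fun c : R * list Mat => (Rabs (fst c),
     if Rle_dec 0 (fst c) then applyw d (snd c) x else applyw d (snd c) (fun i => - x i))).
  assert (Hw : forall s, fold_right (fun c s => fst c + s) s (map f l) = sumabs l + s).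
  { intros s; clear Hl Hs; induction l; simpl; [lra|]. rewrite IHl; lra. }
  assert (Hv : forall i s, fold_right (fun c s => fst c * snd c i + s) s (map f l)
                           = lcomb d l x i + s).
  { intros i s; clear Hl Hs Hw; induction l; simpl; [unfold v0; lra|]. rewrite IHl.
    unfold f, vadd, vscal; simpl. destruct (Rle_dec 0 (fst a)).
    - rewrite Rabs_right by lra; lra.
    - rewrite opp_vscal, applyw_scal. unfold vscal. rewrite Rabs_left by lra. lra. }
  assert (Hnil : forall z, z = x \/ z = (fun i => - x i) -> orbit_pm d As p x z).
  { intros z Hz. exists nil. split; [intros A []|]. split; [simpl; lia|exact Hz]. }
  set (m := (1 - sumabs l) / 2).
  exists (map f l ++ (m, x) :: (m, fun i => - x i) :: nil). split; [|split].
  - apply Forall_app; split.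
    + apply Forall_map. eapply Forall_impl; [|exact Hl]. intros c [H1 H2]. unfold f; simpl.
      split; [apply Rabs_pos|]. exists (snd c). do 2 (split; auto).
      destruct (Rle_dec 0 (fst c)); auto.
    + assert (0 <= m) by (unfold m; lra).
      repeat apply Forall_cons; try apply Forall_nil; simpl; split; auto; apply Hnil; auto.
  - rewrite fold_right_app. simpl. rewrite Hw. unfold m; lra.
  - intros i. rewrite fold_right_app. simpl. rewrite Hv. unfold m; lra.
Qed.

(* Linear dependence: m > d vectors of R^d satisfy a nontrivial linear
   relation.  Induction on d, eliminating the last coordinate with a pivot. *)

Definition nontrivial (m : nat) (b : nat -> R) : Prop := exists k, (k < m)%nat /\ b k <> 0.

Lemma lift_relation m k0 (ws : nat -> Vec) (a b' : nat -> R) : (k0 < m)%nat ->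
  nontrivial (m - 1) b' ->
  (forall i, sumR (m - 1) (fun k => b' k * (ws (skip k0 k) i - a k * ws k0 i)) = 0) ->
  exists b, nontrivial m b /\ forall i, sumR m (fun k => b k * ws k i) = 0.
Proof.
  intros Hk0 [k1 [Hk1 Hb1]] Hrel.
  set (c := - sumR (m - 1) (fun k => b' k * a k)).
  set (b := fun k => if Nat.ltb k k0 then b' k else if Nat.eqb k k0 then c else b' (k - 1)%nat).
  assert (Hbs : forall k, b (skip k0 k) = b' k).
  { intros k; unfold b, skip. destruct (Nat.ltb_spec k k0).
    - destruct (Nat.ltb_spec k k0); auto; lia.
    - destruct (Nat.ltb_spec (S k) k0); [lia|]. destruct (Nat.eqb_spec (S k) k0); [lia|].
      f_equal; lia. }
  assert (Hbk0 : b k0 = c) by (unfold b; destruct (Nat.ltb_spec k0 k0); [lia|]; now rewrite Nat.eqb_refl).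
  exists b. split.
  - exists (skip k0 k1). split; [unfold skip; destruct (Nat.ltb_spec k1 k0); lia|].
    rewrite Hbs; auto.
  - intros i. rewrite (sumR_skip m k0), Hbk0 by auto.
    rewrite (sumR_ext _ _ (fun k => b' k * (ws (skip k0 k) i - a k * ws k0 i)
                                    + ws k0 i * (b' k * a k)))
      by (intros j Hj; rewrite Hbs; ring).
    rewrite sumR_plus, Hrel, sumR_scal. unfold c. ring.
Qed.

Lemma dependence d : forall m (ws : nat -> Vec), (d < m)%nat ->
  (forall k, (k < m)%nat -> inRd d (ws k)) ->
  exists b, nontrivial m b /\ forall i, sumR m (fun k => b k * ws k i) = 0.
Proof.
  induction d as [|d IH]; intros m ws Hm Hw.
  - exists (fun k => if Nat.eqb k 0 then 1 else 0). split.
    + exists 0%nat. split; [lia|]. simpl; lra.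
    + intros i. apply sumR_zero. intros j Hj. rewrite (Hw j Hj i) by lia. lra.
  - destruct (classic (forall k, (k < m)%nat -> ws k d = 0)) as [H0|H0].
    + apply IH; [lia|]. intros k Hk i Hi.
      destruct (Nat.eq_dec i d); [subst; auto | apply Hw; auto; lia].
    + apply not_all_ex_not in H0. destruct H0 as [k0 H0].
      assert (Hk0 : (k0 < m)%nat)
        by (destruct (Nat.lt_ge_cases k0 m); auto; exfalso; apply H0; intros; lia).
      assert (Hne : ws k0 d <> 0) by (intro E; apply H0; auto).
      set (a := fun k => ws (skip k0 k) d / ws k0 d).
      destruct (IH (m - 1)%nat (fun k i => ws (skip k0 k) i - a k * ws k0 i)) as [b' [Hb1 Hb2]];
        [lia| |].
      { intros k Hk i Hi.
        assert (Hsk : (skip k0 k < m)%nat) by (unfold skip; destruct (Nat.ltb_spec k k0); lia).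
        unfold a. destruct (Nat.eq_dec i d).
        - subst. field; auto.
        - rewrite (Hw _ Hsk i), (Hw _ Hk0 i) by lia. lra. }
      exact (lift_relation m k0 ws a b' Hk0 Hb1 Hb2).
Qed.

Lemma last_nonzero m (b : nat -> R) : nontrivial m b ->
  exists j, (j < m)%nat /\ b j <> 0 /\ forall k, (j < k < m)%nat -> b k = 0.
Proof.
  induction m; intros [k [Hk Hb]]; [lia|].
  destruct (Req_dec (b m) 0) as [E|E].
  - destruct IHm as [j [H1 [H2 H3]]].
    + exists k; split; auto. destruct (Nat.eq_dec k m); subst; [contradiction|lia].
    + exists j; repeat split; auto. intros k' Hk'.
      destruct (Nat.eq_dec k' m); subst; auto. apply H3; lia.
  - exists m; repeat split; auto. intros; lia.
Qed.

Definition lin_closed (V : Vec -> Prop) : Prop :=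
  V v0 /\ (forall u v, V u -> V v -> V (vadd u v)) /\ (forall c u, V u -> V (vscal c u)).

Lemma lin_closed_sum V m (b : nat -> R) (W : nat -> Vec) : lin_closed V ->
  (forall j, (j < m)%nat -> V (W j)) -> V (fun i => sumR m (fun j => b j * W j i)).
Proof.
  intros [H0 [Hadd Hscal]]. induction m; intros H; [exact H0|].
  replace (fun i => sumR (S m) (fun j => b j * W j i))
    with (vadd (fun i => sumR m (fun j => b j * W j i)) (vscal (b m) (W m))) by (vext; simpl; ring).
  apply Hadd; [apply IHm; intros; apply H; lia | apply Hscal, H; lia].
Qed.

(* Dimension bound: an increasing family of linear sets V 0 <= V 1 <= ... of
   R^d cannot grow strictly d times starting from a nonzero vector, since
   the d+1 witnesses would be linearly independent. *)
Lemma no_long_chain d (V : nat -> Vec -> Prop) (W : nat -> Vec) :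
  (forall k, lin_closed (V k)) -> (forall k k' v, (k <= k')%nat -> V k v -> V k' v) ->
  (forall j, (j <= d)%nat -> inRd d (W j) /\ V j (W j)) -> ~ vzero (W 0%nat) ->
  (forall j, (j < d)%nat -> ~ V j (W (S j))) -> False.
Proof.
  intros Hlin Hmono HW HW0 Hnew.
  destruct (dependence d (S d) W) as [b [Hb1 Hb2]]; [lia | intros k Hk; apply HW; lia |].
  destruct (last_nonzero _ _ Hb1) as [js [Hj1 [Hj2 Hj3]]].
  assert (Hsum : forall i, sumR js (fun j => b j * W j i) + b js * W js i = 0).
  { intros i. rewrite <- (Hb2 i), (sumR_trunc (S d) (S js)); [reflexivity|lia|].
    intros k Hk. rewrite (Hj3 k) by lia. ring. }
  destruct js as [|j'].
  - apply HW0. intros i. specialize (Hsum i). simpl in Hsum.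
    apply (Rmult_eq_reg_l (b 0%nat)); auto. lra.
  - apply (Hnew j'); [lia|].
    replace (W (S j')) with (vscal (- / b (S j')) (fun i => sumR (S j') (fun j => b j * W j i))).
    2:{ vext. replace (sumR (S j') (fun j => b j * W j x))
               with (- (b (S j') * W (S j') x)) by (specialize (Hsum x); lra).
        field; auto. }
    apply (proj2 (proj2 (Hlin j'))), lin_closed_sum; [apply Hlin|].
    intros j Hj. apply (Hmono j); [lia | apply HW; lia].
Qed.

Definition Sp d As k x v :=
  inRd d v /\ exists l, Forall (fun c => word_of As (snd c) /\ (length (snd c) <= k)%nat) l /\
                        v = lcomb d l x.

Section Span.
Variables (d : nat) (As : list Mat) (x : Vec) (Hx : inRd d x).

Lemma Sp_mono k k' v : (k <= k')%nat -> Sp d As k x v -> Sp d As k' x v.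
Proof.
  intros H [H1 [l [H2 H3]]]. split; auto. exists l; split; auto.
  eapply Forall_impl; [|exact H2]. intros c [A B]; split; auto; lia.
Qed.

Lemma Sp_lin_closed k : lin_closed (Sp d As k x).
Proof.
  split; [|split].
  - split; [apply inRd_v0|]. exists nil; split; auto.
  - intros u v [H1 [l1 [H2 ->]]] [H4 [l2 [H5 ->]]]. split; [apply inRd_vadd; auto|].
    exists (l1 ++ l2). split; [apply Forall_app; auto | rewrite lcomb_app; auto].
  - intros c u [H1 [l1 [H2 ->]]]. split; [apply inRd_vscal; auto|].
    exists (map (fun c0 => (c * fst c0, snd c0)) l1).
    split; [apply Forall_map; auto | rewrite lcomb_scal; auto].
Qed.

Lemma Sp_x : Sp d As 0 x x.
Proof.
  split; auto. exists ((1, nil) :: nil). split.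
  - repeat constructor. intros A [].
  - simpl. vext.
Qed.

Lemma Sp_mv k A v : In A As -> Sp d As k x v -> Sp d As (S k) x (mv d A v).
Proof.
  intros HA [H1 [l [H2 ->]]]. split; [apply mv_inRd|].
  exists (map (fun c => (fst c, snd c ++ A :: nil)) l). split.
  - apply Forall_map. eapply Forall_impl; [|exact H2]. intros c [B C]; simpl. split.
    + intros A' HA'. apply in_app_or in HA'. destruct HA' as [?|[<-|[]]]; auto.
    + rewrite length_app; simpl; lia.
  - rewrite <- applyw_lcomb. reflexivity.
Qed.

(* If the span stops growing at step k, it is an invariant subspace
   containing x, hence all of R^d by irreducibility. *)
Lemma Sp_stable_full k : irreducible d As -> ~ vzero x ->
  (forall v, Sp d As (S k) x v -> Sp d As k x v) -> forall v, inRd d v -> Sp d As k x v.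
Proof.
  intros Hirr Hx0 Hst. destruct (Sp_lin_closed k) as [H0 [Hadd Hscal]].
  destruct (Hirr (Sp d As k x)) as [Hz|Hfull]; auto.
  - split; [intros v [Hv _]; auto | exact (conj H0 (conj Hadd Hscal))].
  - intros A v HA Hv. apply Hst, Sp_mv; auto.
  - exfalso. apply Hx0, Hz, (Sp_mono 0); [lia|apply Sp_x].
Qed.

Lemma spanning p : irreducible d As -> (d - 1 <= p)%nat -> ~ vzero x ->
  exists k, (k <= p)%nat /\ forall v, inRd d v -> Sp d As k x v.
Proof.
  intros Hirr Hp Hx0. apply NNPP; intro Hnot.
  assert (Hgrow : forall k, (k < d)%nat -> exists v, Sp d As (S k) x v /\ ~ Sp d As k x v).
  { intros k Hk. apply NNPP; intro Hno. apply Hnot. exists k. split; [lia|].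
    apply Sp_stable_full; auto. intros v Hv. apply NNPP; intro Hv'. apply Hno; eauto. }
  destruct (choice (fun k v => (k < d)%nat -> Sp d As (S k) x v /\ ~ Sp d As k x v)) as [g Hg].
  { intros k. destruct (Nat.lt_ge_cases k d) as [Hk|Hk].
    - destruct (Hgrow k Hk) as [v Hv]; exists v; auto.
    - exists v0; intros; lia. }
  apply (no_long_chain d (fun k => Sp d As k x) (fun j => if Nat.eqb j 0 then x else g (j - 1)%nat)).
  - apply Sp_lin_closed.
  - intros k k' v; apply Sp_mono.
  - intros [|j] Hj; simpl.
    + split; [auto | apply Sp_x].
    + replace (j - 0)%nat with j by lia. destruct (Hg j) as [Hin _]; [lia|].
      split; [apply Hin | exact Hin].
  - auto.
  - intros j Hj; simpl. replace (j - 0)%nat with j by lia. apply Hg; auto.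
Qed.
End Span.

Definition ev (i : nat) : Vec := fun j => if Nat.eqb j i then 1 else 0.

Lemma ev_inRd d i : (i < d)%nat -> inRd d (ev i).
Proof. intros H j Hj. unfold ev. destruct (Nat.eqb_spec j i); auto; lia. Qed.

Lemma fin_argmax d (g : nat -> R) : (0 < d)%nat ->
  exists j, (j < d)%nat /\ forall i, (i < d)%nat -> g i <= g j.
Proof.
  induction d; intros H; [lia|]. destruct d.
  - exists 0%nat; split; auto; intros i Hi; replace i with 0%nat by lia; lra.
  - destruct IHd as [j [Hj Hj']]; [lia|]. destruct (Rle_dec (g j) (g (S d))).
    + exists (S d); split; auto. intros i Hi.
      destruct (Nat.eq_dec i (S d)); [subst; lra|]. specialize (Hj' i ltac:(lia)); lra.
    + exists j; split; [lia|]. intros i Hi.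
      destruct (Nat.eq_dec i (S d)); [subst; lra | apply Hj'; lia].
Qed.

Section PerturbedBasis.
Variables (d : nat) (f : nat -> Vec) (E : R).
Hypotheses (HdE : INR d * E <= 1 / 2)
  (Hf : forall i j, (i < d)%nat -> (j < d)%nat -> Rabs (f i j - ev i j) <= E).

Lemma near_identity_defect (v : nat -> R) t : (forall i, (i < d)%nat -> Rabs (v i) <= t) ->
  forall j, (j < d)%nat -> Rabs (sumR d (fun i => v i * f i j) - v j) <= t / 2.
Proof.
  intros Hv j Hj. assert (Ht : 0 <= t) by (pose proof (Hv j Hj); pose proof (Rabs_pos (v j)); lra).
  replace (sumR d (fun i => v i * f i j) - v j) with (sumR d (fun i => v i * (f i j - ev i j))).
  2:{ rewrite <- (sumR_delta d v j Hj).
      replace (sumR d (fun i => v i * (f i j - ev i j)))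
        with (sumR d (fun i => v i * f i j) + (-1) * sumR d (fun i => v i * ev j i)).
      - unfold ev. ring.
      - rewrite <- sumR_scal, <- sumR_plus. apply sumR_ext; intros i Hi. unfold ev.
        destruct (Nat.eqb_spec j i), (Nat.eqb_spec i j); try lia; ring. }
  eapply Rle_trans; [apply sumR_abs|].
  apply Rle_trans with (sumR d (fun _ => t * E)).
  - apply sumR_le; intros i Hi. rewrite Rabs_mult. apply Rmult_le_compat; auto using Rabs_pos.
  - rewrite sumR_const. replace (INR d * (t * E)) with (t * (INR d * E)) by ring.
    apply Rle_trans with (t * (1 / 2)); [apply Rmult_le_compat_l; lra | lra].
Qed.

Lemma coeff_bound (v : nat -> R) (y : Vec) s :
  (forall j, (j < d)%nat -> sumR d (fun i => v i * f i j) = y j) ->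
  (forall j, (j < d)%nat -> Rabs (y j) <= s) ->
  forall i, (i < d)%nat -> Rabs (v i) <= 2 * s.
Proof.
  intros Hv Hy i Hi. destruct (fin_argmax d (fun i => Rabs (v i))) as [i0 [Hi0 Hmax]]; [lia|].
  pose proof (near_identity_defect v (Rabs (v i0)) Hmax i0 Hi0) as Hdef.
  rewrite Hv in Hdef by auto. rewrite Rabs_minus_sym in Hdef.
  pose proof (Rabs_triang_inv (v i0) (y i0)). specialize (Hy i0 Hi0). specialize (Hmax i Hi).
  simpl in Hmax. lra.
Qed.

Lemma perturbed_solve : (forall i, (i < d)%nat -> inRd d (f i)) ->
  forall y s, inRd d y -> (forall j, (j < d)%nat -> Rabs (y j) <= s) ->
  exists v : nat -> R, (forall j, sumR d (fun i => v i * f i j) = y j) /\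
                       forall i, (i < d)%nat -> Rabs (v i) <= 2 * s.
Proof.
  intros Hfi y s Hy Hs.
  set (ws := fun k => if Nat.ltb k d then f k else y).
  destruct (dependence d (S d) ws) as [b [[k0 [Hk0 Hbk0]] Hb]]; [lia| |].
  { intros k Hk. unfold ws. destruct (Nat.ltb_spec k d); auto. }
  assert (Hsum : forall j, sumR d (fun i => b i * f i j) + b d * y j = 0).
  { intros j. rewrite <- (Hb j). simpl. unfold ws. destruct (Nat.ltb_spec d d); [lia|]. f_equal.
    apply sumR_ext; intros i Hi. destruct (Nat.ltb_spec i d); [auto|lia]. }
  assert (Hbd : b d <> 0).
  { intro Hz. apply Hbk0.
    assert (Hk0d : (k0 < d)%nat) by (destruct (Nat.eq_dec k0 d); [subst; contradiction | lia]).
    assert (Hb0 : Rabs (b k0) <= 2 * 0).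
    { apply (coeff_bound b v0 0); auto.
      - intros j Hj. specialize (Hsum j). rewrite Hz in Hsum. unfold v0. lra.
      - intros j Hj. unfold v0. rewrite Rabs_R0. lra. }
    destruct (Req_dec (b k0) 0) as [?|Hne]; auto. pose proof (Rabs_pos_lt _ Hne). lra. }
  assert (Hv : forall j, sumR d (fun i => - b i / b d * f i j) = y j).
  { intros j. specialize (Hsum j).
    rewrite (sumR_ext _ _ (fun i => (- / b d) * (b i * f i j))) by (intros; unfold Rdiv; ring).
    rewrite sumR_scal. replace (sumR d (fun i => b i * f i j)) with (- (b d * y j)) by lra.
    field; auto. }
  exists (fun i => - b i / b d). split; auto.
  apply (coeff_bound _ y); auto.
Qed.
End PerturbedBasis.

Definition amat d (A : Mat) := sumR d (fun i => sumR d (fun j => Rabs (A i j))).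

Lemma amat_nonneg d A : 0 <= amat d A.
Proof. apply sumR_nonneg; intros; apply sumR_nonneg; intros; apply Rabs_pos. Qed.

Lemma mv_bound d A v s : 0 <= s -> (forall j, (j < d)%nat -> Rabs (v j) <= s) ->
  forall i, (i < d)%nat -> Rabs (mv d A v i) <= amat d A * s.
Proof.
  intros Hs Hv i Hi. unfold mv. destruct (Nat.ltb_spec i d); [|lia].
  eapply Rle_trans; [apply sumR_abs|].
  apply Rle_trans with (sumR d (fun j => s * Rabs (A i j))).
  { apply sumR_le; intros j Hj. rewrite Rabs_mult, Rmult_comm.
    apply Rmult_le_compat_r; auto. apply Rabs_pos. }
  rewrite sumR_scal, Rmult_comm. apply Rmult_le_compat_r; auto. unfold amat.
  apply (sumR_single_le d (fun i => sumR d (fun j => Rabs (A i j)))); auto.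
  intros; apply sumR_nonneg; intros; apply Rabs_pos.
Qed.

Lemma applyw_bound d w : exists C, 0 <= C /\
  forall v s, 0 <= s -> (forall j, (j < d)%nat -> Rabs (v j) <= s) ->
  forall i, (i < d)%nat -> Rabs (applyw d w v i) <= C * s.
Proof.
  induction w as [|A w IH].
  - exists 1. split; [lra|]. intros v s Hs Hv i Hi. unfold applyw; simpl. rewrite Rmult_1_l; auto.
  - destruct IH as [C [HC HCw]]. exists (C * amat d A).
    split; [apply Rmult_le_pos; auto; apply amat_nonneg|].
    intros v s Hs Hv i Hi. rewrite applyw_cons, Rmult_assoc. apply HCw; auto.
    + apply Rmult_le_pos; auto; apply amat_nonneg.
    + apply mv_bound; auto.
Qed.

Lemma lcomb_bound d l : exists B, 0 <= B /\
  forall v s, 0 <= s -> (forall j, (j < d)%nat -> Rabs (v j) <= s) ->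
  forall i, (i < d)%nat -> Rabs (lcomb d l v i) <= B * s.
Proof.
  induction l as [|c l IH].
  - exists 0. split; [lra|]. intros. simpl. unfold v0. rewrite Rabs_R0; lra.
  - destruct IH as [B [HB HBl]]. destruct (applyw_bound d (snd c)) as [C [HC HCw]].
    pose proof (Rabs_pos (fst c)).
    exists (Rabs (fst c) * C + B). split; [nra|].
    intros v s Hs Hv i Hi. simpl. unfold vadd, vscal. eapply Rle_trans; [apply Rabs_triang|].
    rewrite Rabs_mult. specialize (HBl v s Hs Hv i Hi). specialize (HCw v s Hs Hv i Hi). nra.
Qed.

Lemma fin_bound d (Q : nat -> R -> Prop) : (forall i B B', Q i B -> B <= B' -> Q i B') ->
  (forall i, (i < d)%nat -> exists B, Q i B) -> exists B, 0 <= B /\ forall i, (i < d)%nat -> Q i B.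
Proof.
  intros Hm. induction d; intros H; [exists 0; split; [lra | intros; lia]|].
  destruct IHd as [B [HB0 HB]]; [intros; apply H; lia|].
  destruct (H d ltac:(lia)) as [B' HB'].
  exists (Rmax B B'). split; [eapply Rle_trans; [exact HB0 | apply Rmax_l]|].
  intros i Hi. destruct (Nat.eq_dec i d).
  - subst. eapply Hm; eauto; apply Rmax_r.
  - eapply Hm; [apply HB; lia | apply Rmax_l].
Qed.

Definition in_box d (lo hi : Vec) (x : Vec) := inRd d x /\ forall i, (i < d)%nat -> lo i <= x i <= hi i.
Definition uniform_on d (P : Vec -> R -> Prop) lo hi :=
  exists delta, 0 < delta /\ forall x, in_box d lo hi x -> P x delta.
Definition delta_antitone (P : Vec -> R -> Prop) :=
  forall x delta delta', P x delta -> 0 < delta' <= delta -> P x delta'.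
Definition vupd (f : Vec) j a : Vec := fun i => if Nat.eqb i j then a else f i.

Lemma nested_boxes_point d (lo hi : nat -> Vec) :
  (forall k i, (i < d)%nat -> lo k i <= lo (S k) i /\ hi (S k) i <= hi k i) ->
  (forall k i, (i < d)%nat -> lo k i <= hi k i) ->
  exists xs, inRd d xs /\ forall k i, (i < d)%nat -> lo k i <= xs i <= hi k i.
Proof.
  intros Hmon Hle.
  assert (Hmon2 : forall k m i, (i < d)%nat -> lo k i <= lo (k + m)%nat i /\ hi (k + m)%nat i <= hi k i).
  { intros k m i Hi. induction m; [rewrite Nat.add_0_r; lra|].
    rewrite Nat.add_succ_r. destruct (Hmon (k + m)%nat i Hi). lra. }
  assert (Hcross : forall k k' i, (i < d)%nat -> lo k' i <= hi k i).
  { intros k k' i Hi.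
    destruct (Hmon2 k' (Nat.max k k' - k')%nat i Hi) as [A1 _].
    destruct (Hmon2 k (Nat.max k k' - k)%nat i Hi) as [_ A2].
    replace (k' + (Nat.max k k' - k'))%nat with (Nat.max k k') in A1 by lia.
    replace (k + (Nat.max k k' - k))%nat with (Nat.max k k') in A2 by lia.
    specialize (Hle (Nat.max k k') i Hi). lra. }
  exists (fun i => if Nat.ltb i d then Rsup (fun z => exists k, z = lo k i) else 0). split.
  - intros i Hi. destruct (Nat.ltb_spec i d); auto; lia.
  - intros k i Hi. destruct (Nat.ltb_spec i d); [|lia]. unfold Rsup.
    destruct excluded_middle_informative as [Hb|Hb].
    + destruct (completeness _ _ _) as [s [U L]]; simpl. split.
      * apply U. exists k; auto.
      * apply L. intros z [k' ->]. apply Hcross; auto.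
    + exfalso. apply Hb. split.
      * exists (hi 0%nat i). intros z [k' ->]. apply Hcross; auto.
      * exists (lo 0%nat i). exists 0%nat; auto.
Qed.

Lemma pow2_ge n : INR n <= 2 ^ n.
Proof.
  induction n; [simpl; lra|]. rewrite S_INR. simpl.
  assert (1 <= 2 ^ n) by (apply pow_R1_Rle; lra). lra.
Qed.

Lemma halving_small c r : 0 <= c -> 0 < r -> exists k, c / 2 ^ k < r.
Proof.
  intros Hc Hr. destruct (archimed_cor1 (r / (c + 1))) as [K [HK1 HK2]].
  { apply Rdiv_lt_0_compat; lra. }
  exists K. assert (0 < INR K) by (apply lt_0_INR; auto). pose proof (pow2_ge K).
  assert (0 < 2 ^ K) by (apply pow_lt; lra).
  apply Rmult_lt_compat_r with (r := INR K * (c + 1)) in HK1; [|nra].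
  replace (/ INR K * (INR K * (c + 1))) with (c + 1) in HK1 by (field; lra).
  replace (r / (c + 1) * (INR K * (c + 1))) with (r * INR K) in HK1 by (field; lra).
  apply (Rmult_lt_reg_r (2 ^ K)); auto. unfold Rdiv. rewrite Rmult_assoc, Rinv_l by lra. nra.
Qed.

Section Compact.
Variables (d : nat) (P : Vec -> R -> Prop) (HP : delta_antitone P).

Lemma uniform_split lo hi j mid : (j < d)%nat ->
  uniform_on d P lo (vupd hi j mid) -> uniform_on d P (vupd lo j mid) hi -> uniform_on d P lo hi.
Proof.
  intros Hj [d1 [H1 H1']] [d2 [H2 H2']]. exists (Rmin d1 d2). split; [apply Rmin_case; auto|].
  intros x [Hx Hb]. destruct (Rle_dec (x j) mid).
  - apply (HP x d1); [|split; [apply Rmin_case; lra | apply Rmin_l]].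
    apply H1'. split; auto. intros i Hi. unfold vupd.
    destruct (Nat.eqb_spec i j); [subst; split; [apply Hb; auto | auto] | apply Hb; auto].
  - apply (HP x d2); [|split; [apply Rmin_case; lra | apply Rmin_r]].
    apply H2'. split; auto. intros i Hi. unfold vupd.
    destruct (Nat.eqb_spec i j); [subst; split; [lra | apply Hb; auto] | apply Hb; auto].
Qed.

Lemma bad_box_halve_upto j : (j <= d)%nat -> forall lo hi, ~ uniform_on d P lo hi ->
  (forall i, (i < d)%nat -> lo i <= hi i) ->
  exists lo' hi', ~ uniform_on d P lo' hi' /\
   (forall i, (i < d)%nat -> lo i <= lo' i /\ lo' i <= hi' i /\ hi' i <= hi i) /\
   (forall i, (i < j)%nat -> hi' i - lo' i = (hi i - lo i) / 2) /\
   (forall i, (j <= i)%nat -> lo' i = lo i /\ hi' i = hi i).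
Proof.
  induction j; intros Hj lo hi Hg Ho.
  - exists lo, hi. repeat split; auto; try lra; try apply Ho; auto. intros; lia.
  - destruct (IHj ltac:(lia) lo hi Hg Ho) as [lo' [hi' [G1 [G2 [G3 G4]]]]].
    destruct (G4 j ltac:(lia)) as [E1 E2].
    assert (Hjd : (j < d)%nat) by lia.
    set (mid := (lo' j + hi' j) / 2).
    assert (Hmid : lo' j <= mid <= hi' j) by (destruct (G2 j Hjd) as [? [? ?]]; unfold mid; lra).
    assert (Hsub : forall lo'' hi'', (forall i, i <> j -> lo'' i = lo' i /\ hi'' i = hi' i) ->
              lo' j <= lo'' j <= hi'' j -> hi'' j <= hi' j ->
              hi'' j - lo'' j = (hi' j - lo' j) / 2 ->
              (forall i, (i < d)%nat -> lo i <= lo'' i /\ lo'' i <= hi'' i /\ hi'' i <= hi i) /\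
              (forall i, (i < S j)%nat -> hi'' i - lo'' i = (hi i - lo i) / 2) /\
              (forall i, (S j <= i)%nat -> lo'' i = lo i /\ hi'' i = hi i)).
    { intros lo'' hi'' Hoff Hl Hh Hw. split; [|split].
      - intros i Hi. destruct (Nat.eq_dec i j) as [->|Hne].
        + destruct (G2 j Hjd) as [? [? ?]]. lra.
        + destruct (Hoff i Hne) as [-> ->]. apply G2; auto.
      - intros i Hi. destruct (Nat.eq_dec i j) as [->|Hne].
        + rewrite Hw, E1, E2. lra.
        + destruct (Hoff i Hne) as [-> ->]. apply G3; lia.
      - intros i Hi. destruct (Hoff i ltac:(lia)) as [-> ->]. apply G4; lia. }
    assert (Hupd_off : forall (g : Vec) i, i <> j -> vupd g j mid i = g i).
    { intros g i Hne. unfold vupd. destruct (Nat.eqb_spec i j); [contradiction | auto]. }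
    assert (Hat : forall (g : Vec), vupd g j mid j = mid) by (intros; unfold vupd; now rewrite Nat.eqb_refl).
    destruct (classic (uniform_on d P lo' (vupd hi' j mid))) as [HL|HL].
    + exists (vupd lo' j mid), hi'. split.
      * intro HR. apply G1. eapply uniform_split; eauto.
      * apply Hsub; rewrite ?Hat; auto; try lra. unfold mid; lra.
    + exists lo', (vupd hi' j mid). split; auto.
      apply Hsub; rewrite ?Hat; auto; try lra. unfold mid; lra.
Qed.

Variable M : R.
Hypothesis HM : 0 <= M.

Hypothesis Hloc : forall x, in_box d (fun _ => - M) (fun _ => M) x -> exists r, 0 < r /\
  exists delta, 0 < delta /\ forall x', in_box d (fun _ => - M) (fun _ => M) x' ->
    (forall i, (i < d)%nat -> Rabs (x' i - x i) < r) -> P x' delta.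

Lemma compact_box : uniform_on d P (fun _ => - M) (fun _ => M).
Proof.
  apply NNPP; intro Hbad.
  set (bad := fun b : Vec * Vec => ~ uniform_on d P (fst b) (snd b) /\
                                   forall i, (i < d)%nat -> fst b i <= snd b i).
  destruct (choice (fun (b b' : Vec * Vec) => bad b -> bad b' /\
     (forall i, (i < d)%nat -> fst b i <= fst b' i /\ snd b' i <= snd b i) /\
     (forall i, (i < d)%nat -> snd b' i - fst b' i = (snd b i - fst b i) / 2))) as [f Hf].
  { intros [lo hi]. destruct (classic (bad (lo, hi))) as [[H1 H2]|H].
    - destruct (bad_box_halve_upto d (le_n d) lo hi H1 H2) as [lo' [hi' [A [B [C _]]]]].
      exists (lo', hi'). intros _. simpl.
      split; [split; [exact A | intros i Hi; apply B; auto] |].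
      split; [intros i Hi; destruct (B i Hi) as [? [? ?]]; lra | exact C].
    - exists (lo, hi); intros; tauto. }
  set (sq := fun k => Nat.iter k f ((fun _ => - M), (fun _ => M)) : Vec * Vec).
  assert (Inv : forall k, bad (sq k) /\
     (forall i, (i < d)%nat -> - M <= fst (sq k) i /\ snd (sq k) i <= M) /\
     forall i, (i < d)%nat -> snd (sq k) i - fst (sq k) i = 2 * M / 2 ^ k).
  { induction k as [|k [IH1 [IH2 IH3]]].
    - split; [split; [exact Hbad | simpl; intros; lra]|]. split; intros; simpl; [lra | field].
    - destruct (Hf (sq k) IH1) as [D [Hs F]]. change (sq (S k)) with (f (sq k)).
      split; [exact D|]. split.
      + intros i Hi. destruct (Hs i Hi), (IH2 i Hi). lra.
      + intros i Hi. rewrite F, IH3 by auto. simpl. field; apply pow_nonzero; lra. }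
  destruct (nested_boxes_point d (fun k => fst (sq k)) (fun k => snd (sq k))) as [xs [Hxs Hin]].
  { intros k i Hi. apply (Hf (sq k) (proj1 (Inv k))); auto. }
  { intros k i Hi. apply (proj2 (proj1 (Inv k))); auto. }
  destruct (Hloc xs) as [r [Hr [delta [Hd Hdelta]]]].
  { split; auto. intros i Hi. apply (Hin 0%nat i Hi). }
  destruct (halving_small (2 * M) r) as [K HK]; [lra | auto |].
  destruct (Inv K) as [[Hng _] [Hinside Hw]]. apply Hng. exists delta. split; auto.
  intros x [Hx Hb]. apply Hdelta.
  - split; auto. intros i Hi. destruct (Hb i Hi), (Hinside i Hi). lra.
  - intros i Hi. destruct (Hb i Hi). destruct (Hin K i Hi). specialize (Hw i Hi).
    apply Rabs_def1; lra.
Qed.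
End Compact.

Definition trunc (k : nat) (v : Vec) : Vec := fun i => if Nat.ltb i k then v i else 0.

Lemma fin_min d (g : nat -> R) : (forall i, (i < d)%nat -> 0 < g i) ->
  exists r, 0 < r /\ forall i, (i < d)%nat -> r <= g i.
Proof.
  induction d; intros H; [exists 1; split; intros; lra || lia|].
  destruct IHd as [r [Hr Hr']]; [intros; apply H; lia|].
  exists (Rmin r (g d)). split; [apply Rmin_case; auto|].
  intros i Hi. destruct (Nat.eq_dec i d); [subst; apply Rmin_r|].
  eapply Rle_trans; [apply Rmin_l | apply Hr'; lia].
Qed.

Lemma coords_avoid_one d (x : Vec) : ~ (exists i, (i < d)%nat /\ Rabs (x i) = 1) ->
  exists r, 0 < r /\ forall x', (forall i, (i < d)%nat -> Rabs (x' i - x i) < r) ->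
    ~ (exists i, (i < d)%nat /\ Rabs (x' i) = 1).
Proof.
  intros Hx. destruct (fin_min d (fun i => Rabs (Rabs (x i) - 1))) as [r [Hr Hr']].
  { intros i Hi. apply Rabs_pos_lt. intro E. apply Hx. exists i; split; auto; lra. }
  exists r; split; auto. intros x' Hc [i [Hi Hi']].
  specialize (Hc i Hi). specialize (Hr' i Hi).
  pose proof (Rabs_triang_inv (x' i) (x i)). pose proof (Rabs_triang_inv (x i) (x' i)).
  rewrite Rabs_minus_sym in H0. rewrite Hi' in *.
  destruct (Rle_dec (Rabs (x i)) 1).
  - rewrite Rabs_left1 in Hr' by lra. lra.
  - rewrite Rabs_right in Hr' by lra. lra.
Qed.

Section NormEquivalence.
Variables (d : nat) (N : Vec -> R) (HN : is_norm d N).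

Lemma trunc_inRd k v : inRd d v -> inRd d (trunc k v).
Proof. intros H j Hj. unfold trunc. destruct (Nat.ltb j k); auto. Qed.

Lemma norm_upper : exists K, 0 < K /\ forall v s, inRd d v -> 0 <= s ->
  (forall i, (i < d)%nat -> Rabs (v i) <= s) -> N v <= K * s.
Proof.
  set (Ssum := sumR d (fun i => N (ev i))).
  assert (HS : 0 <= Ssum) by (apply sumR_nonneg; intros; apply (N_nonneg d N HN), ev_inRd; auto).
  exists (Ssum + 1). split; [lra|]. intros v s Hv Hs Hb.
  assert (Htrunc : forall k, (k <= d)%nat -> N (trunc k v) <= s * sumR k (fun i => N (ev i))).
  { induction k; intros Hk.
    - replace (trunc 0 v) with v0 by (vext; unfold trunc; simpl; auto).
      rewrite (N_v0 d N HN). simpl; lra.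
    - replace (trunc (S k) v) with (vadd (trunc k v) (vscal (v k) (ev k))).
      2:{ vext. unfold trunc, ev. destruct (Nat.ltb_spec x k), (Nat.ltb_spec x (S k)),
            (Nat.eqb_spec x k); try lia; subst; ring. }
      eapply Rle_trans; [apply (N_add d N HN);
        [apply trunc_inRd; auto | apply inRd_vscal, ev_inRd; lia]|].
      rewrite (N_scal d N HN) by (apply ev_inRd; lia). simpl sumR.
      assert (0 <= N (ev k)) by (apply (N_nonneg d N HN), ev_inRd; lia).
      specialize (IHk ltac:(lia)). specialize (Hb k ltac:(lia)). nra. }
  specialize (Htrunc d (le_n d)). replace (trunc d v) with v in Htrunc.
  - fold Ssum in Htrunc. nra.
  - vext. unfold trunc. destruct (Nat.ltb_spec x d); auto.
Qed.

Lemma norm_lipschitz : exists K, 0 < K /\ forall x x' r, inRd d x -> inRd d x' -> 0 <= r ->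
  (forall i, (i < d)%nat -> Rabs (x' i - x i) <= r) -> Rabs (N x' - N x) <= K * r.
Proof.
  destruct norm_upper as [K [HK HKu]]. exists K. split; auto. intros x x' r Hx Hx' Hr Hc.
  assert (Hd : forall u u', inRd d u -> inRd d u' ->
            (forall i, (i < d)%nat -> Rabs (u' i - u i) <= r) -> N u <= N u' + K * r).
  { intros u u' Hu Hu' Hcu. eapply Rle_trans; [apply (N_rev d N HN u u'); auto|].
    apply Rplus_le_compat_l, HKu; auto.
    - apply inRd_vadd; auto; apply inRd_vscal; auto.
    - intros i Hi. unfold vadd, vscal. rewrite <- Rabs_Ropp.
      replace (- (u i + -1 * u' i)) with (u' i - u i) by ring. auto. }
  apply Rabs_le. split.
  - pose proof (Hd x x' Hx Hx' Hc). lra.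
  - assert (Hc' : forall i, (i < d)%nat -> Rabs (x i - x' i) <= r)
      by (intros; rewrite Rabs_minus_sym; auto).
    pose proof (Hd x' x Hx' Hx Hc'). lra.
Qed.

Lemma norm_lower_local x : in_box d (fun _ => -1) (fun _ => 1) x -> exists r, 0 < r /\
  exists delta, 0 < delta /\ forall x', in_box d (fun _ => -1) (fun _ => 1) x' ->
    (forall i, (i < d)%nat -> Rabs (x' i - x i) < r) ->
    (exists i, (i < d)%nat /\ Rabs (x' i) = 1) -> delta <= N x'.
Proof.
  intros [Hx _]. destruct (classic (exists i, (i < d)%nat /\ Rabs (x i) = 1)) as [Hone|Hnone].
  - destruct norm_lipschitz as [K [HK HKl]].
    assert (Hpos : 0 < N x).
    { apply (N_pos d N HN); auto. intro Hz. destruct Hone as [i [_ Hi]].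
      rewrite (Hz i), Rabs_R0 in Hi; lra. }
    exists (N x / (2 * K)). split; [apply Rdiv_lt_0_compat; lra|].
    exists (N x / 2). split; [lra|]. intros x' [Hx' _] Hc _.
    assert (Hl : Rabs (N x' - N x) <= K * (N x / (2 * K))).
    { apply HKl; auto; [left; apply Rdiv_lt_0_compat; lra | intros i Hi; left; auto]. }
    replace (K * (N x / (2 * K))) with (N x / 2) in Hl by (field; lra).
    apply Rabs_le_inv in Hl. lra.
  - destruct (coords_avoid_one d x Hnone) as [r [Hr Hr']].
    exists r; split; auto. exists 1; split; [lra|]. intros x' _ Hc Hone.
    exfalso. exact (Hr' x' Hc Hone).
Qed.

(* c |v_i| <= N v: compactness of [-1,1]^d gives it on vectors with
   max_i |v_i| = 1, and homogeneity extends it. *)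
Lemma norm_lower : exists c, 0 < c /\ forall v i, inRd d v -> (i < d)%nat -> c * Rabs (v i) <= N v.
Proof.
  set (P := fun (v : Vec) (delta : R) => (exists i, (i < d)%nat /\ Rabs (v i) = 1) -> delta <= N v).
  destruct (compact_box d P) with (M := 1) as [delta [Hdelta Hunif]].
  { intros x a b H1 H2 H3; specialize (H1 H3); lra. }
  { lra. }
  { exact norm_lower_local. }
  exists delta. split; auto. intros v i Hv Hi.
  destruct (fin_argmax d (fun i => Rabs (v i))) as [j [Hj Hj']]; [lia|]. simpl in Hj'.
  assert (Hji := Hj' i Hi).
  destruct (Req_dec (Rabs (v j)) 0) as [E|E].
  { assert (Rabs (v i) = 0) by (pose proof (Rabs_pos (v i)); lra).
    rewrite H. pose proof (N_nonneg d N HN v Hv); lra. }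
  assert (Hs : 0 < Rabs (v j)) by (pose proof (Rabs_pos (v j)); lra).
  assert (Hscaled : Rabs (/ Rabs (v j)) = / Rabs (v j)) by (rewrite Rabs_inv, Rabs_Rabsolu; auto).
  assert (HP : delta <= N (vscal (/ Rabs (v j)) v)).
  { apply Hunif.
    - split; [apply inRd_vscal; auto|]. intros k Hk. apply Rabs_le_inv. unfold vscal.
      rewrite Rabs_mult, Hscaled. specialize (Hj' k Hk).
      apply (Rmult_le_reg_l (Rabs (v j))); auto. rewrite <- Rmult_assoc, Rinv_r by lra. lra.
    - exists j. split; auto. unfold vscal. rewrite Rabs_mult, Hscaled. field; lra. }
  rewrite (N_scal d N HN), Hscaled in HP by auto.
  apply (Rmult_le_compat_l (Rabs (v j))) in HP; [|lra].
  rewrite <- Rmult_assoc, Rinv_r, Rmult_1_l in HP by lra.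
  assert (delta * Rabs (v i) <= delta * Rabs (v j)) by (apply Rmult_le_compat_l; lra). lra.
Qed.
End NormEquivalence.

Fixpoint comb (v : nat -> R) (L : nat -> list (R * list Mat)) n :=
  match n with O => nil | S n => comb v L n ++ map (fun c => (v n * fst c, snd c)) (L n) end.

Lemma lcomb_comb d v L n x :
  lcomb d (comb v L n) x = fun j => sumR n (fun i => v i * lcomb d (L i) x j).
Proof. induction n; simpl; [reflexivity|]. rewrite lcomb_app, lcomb_scal, IHn. reflexivity. Qed.

Lemma sumabs_comb v L n : sumabs (comb v L n) = sumR n (fun i => Rabs (v i) * sumabs (L i)).
Proof. induction n; simpl; [reflexivity|]. rewrite sumabs_app, sumabs_scal, IHn. reflexivity. Qed.

Definition short_words As p (l : list (R * list Mat)) : Prop :=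
  Forall (fun c => word_of As (snd c) /\ (length (snd c) <= p)%nat) l.

Lemma short_words_comb As p v L n :
  (forall i, (i < n)%nat -> short_words As p (L i)) -> short_words As p (comb v L n).
Proof.
  induction n; intros H; simpl; [constructor|]. apply Forall_app; split.
  - apply IHn; intros; apply H; lia.
  - apply Forall_map. eapply Forall_impl; [|apply H; lia]. auto.
Qed.

Lemma comb_in_hull d As p x n L (v : nat -> R) y : inRd d x ->
  (forall i, (i < n)%nat -> short_words As p (L i)) ->
  sumR n (fun i => Rabs (v i) * sumabs (L i)) <= 1 ->
  (forall j, sumR n (fun i => v i * lcomb d (L i) x j) = y j) ->
  in_conv (orbit_pm d As p x) y.
Proof.
  intros Hx HL Hw Hy. replace y with (lcomb d (comb v L n) x).
  - apply conv_builder; auto; [apply short_words_comb; auto | rewrite sumabs_comb; auto].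
  - rewrite lcomb_comb. vext. apply Hy.
Qed.

Section Radius.
Variables (d : nat) (As : list Mat) (p : nat) (N : Vec -> R).
Hypotheses (Hirr : irreducible d As) (HN : is_norm d N) (Hp : (d - 1 <= p)%nat).

Lemma basis_words xs : inRd d xs -> ~ vzero xs ->
  exists L, forall i, (i < d)%nat -> short_words As p (L i) /\ ev i = lcomb d (L i) xs.
Proof.
  intros Hxs Hx0. destruct (spanning d As xs Hxs p Hirr Hp Hx0) as [k [Hk Hsp]].
  apply (choice (fun i l => (i < d)%nat -> short_words As p l /\ ev i = lcomb d l xs)).
  intros i. destruct (Nat.lt_ge_cases i d) as [Hi|Hi]; [|exists nil; intros; lia].
  destruct (Hsp (ev i) (ev_inRd d i Hi)) as [_ [l [H1 H2]]]. exists l. intros _. split; auto.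
  eapply Forall_impl; [|exact H1]. intros c [? ?]; split; auto; lia.
Qed.

(* Local version of the uniform radius: near a unit vector xs, the hulls
   conv(A_p(x') U A_p(-x')) all contain a common sup-norm ball, because the
   combinations expressing the basis in terms of the G xs, applied to x',
   form a perturbed basis. *)
Lemma local_radius xs : inRd d xs -> N xs = 1 -> exists r, 0 < r /\ exists delta, 0 < delta /\
  forall x', inRd d x' -> (forall i, (i < d)%nat -> Rabs (x' i - xs i) < r) ->
  forall y, inRd d y -> (forall j, (j < d)%nat -> Rabs (y j) <= delta) ->
  in_conv (orbit_pm d As p x') y.
Proof.
  intros Hxs HN1.
  assert (Hx0 : ~ vzero xs).
  { intro Hz. replace xs with v0 in HN1 by (vext; symmetry; apply Hz). rewrite (N_v0 d N HN) in HN1; lra. }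
  destruct (basis_words xs Hxs Hx0) as [L HL].
  destruct (fin_bound d (fun i B => 0 <= B /\ forall v s, 0 <= s ->
      (forall j, (j < d)%nat -> Rabs (v j) <= s) ->
      forall j, (j < d)%nat -> Rabs (lcomb d (L i) v j) <= B * s)) as [B [HB0 HB]].
  { intros i B B' [H1 H2] H3. split; [lra|]. intros v s Hs Hv j Hj.
    specialize (H2 v s Hs Hv j Hj). assert (B * s <= B' * s) by (apply Rmult_le_compat_r; lra). lra. }
  { intros i Hi. destruct (lcomb_bound d (L i)) as [B [H1 H2]]. exists B; auto. }
  set (W := sumR d (fun i => sumabs (L i))).
  assert (HW : 0 <= W) by (apply sumR_nonneg; intros; apply sumabs_nonneg).
  assert (Hd0 : 0 <= INR d) by apply pos_INR.
  set (r := / (2 * (INR d * B + 1))).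
  assert (Hr : 0 < r) by (apply Rinv_0_lt_compat; nra).
  exists r. split; auto. exists (/ (2 * (W + 1))). split; [apply Rinv_0_lt_compat; lra|].
  intros x' Hx' Hc y Hy Hyb.
  destruct (perturbed_solve d (fun i => lcomb d (L i) x') (B * r)) with (y := y) (s := / (2 * (W + 1)))
    as [v [Hv1 Hv2]]; [| | | exact Hy | exact Hyb |].
  - unfold r. replace (INR d * (B * / (2 * (INR d * B + 1)))) with ((INR d * B) / (2 * (INR d * B + 1)))
      by (field; nra).
    apply Rmult_le_reg_r with (2 * (INR d * B + 1)); [nra|].
    unfold Rdiv. rewrite Rmult_assoc, Rinv_l by nra. nra.
  - intros i j Hi Hj. destruct (HL i Hi) as [_ ->].
    replace (lcomb d (L i) x' j - lcomb d (L i) xs j) with (lcomb d (L i) (vadd x' (vscal (-1) xs)) j)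
      by (rewrite lcomb_addx, lcomb_scalx; unfold vadd, vscal; ring).
    apply (proj2 (HB i Hi)); auto; [lra|]. intros j' Hj'. specialize (Hc j' Hj').
    unfold vadd, vscal. replace (x' j' + -1 * xs j') with (x' j' - xs j') by ring. lra.
  - intros i Hi. apply lcomb_inRd; auto.
  - apply (comb_in_hull d As p x' d L v y Hx'); auto.
    + intros i Hi; apply HL; auto.
    + apply Rle_trans with (sumR d (fun i => (2 * / (2 * (W + 1))) * sumabs (L i))).
      { apply sumR_le. intros i Hi. apply Rmult_le_compat_r; [apply sumabs_nonneg | auto]. }
      rewrite sumR_scal. fold W.
      replace (2 * / (2 * (W + 1)) * W) with (W / (W + 1)) by (field; lra).
      apply Rmult_le_reg_r with (W + 1); [lra|].
      unfold Rdiv. rewrite Rmult_assoc, Rinv_l by lra. lra.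
Qed.

(* The uniform radius: one t0 > 0 with S(t0) inside conv(A_p(x) U A_p(-x))
   for all unit vectors x, by compactness of the box containing the sphere. *)
Lemma uniform_radius : exists t0, 0 < t0 /\ forall x, inRd d x -> N x = 1 ->
  forall y, inRd d y -> N y <= t0 -> in_conv (orbit_pm d As p x) y.
Proof.
  destruct (norm_lower d N HN) as [c [Hc Hcl]].
  destruct (norm_lipschitz d N HN) as [K [HK HKl]].
  set (P := fun x' delta => N x' = 1 -> forall y, inRd d y ->
              (forall j, (j < d)%nat -> Rabs (y j) <= delta) -> in_conv (orbit_pm d As p x') y).
  destruct (compact_box d P) with (M := / c) as [delta [Hdelta Hunif]].
  { intros x a b H1 H2 H3 y Hy Hyb. apply H1; auto. intros j Hj; specialize (Hyb j Hj); lra. }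
  { left; apply Rinv_0_lt_compat; auto. }
  { intros x [Hx _]. destruct (Req_dec (N x) 1) as [E|E].
    - destruct (local_radius x Hx E) as [r [Hr [delta [Hdelta H]]]].
      exists r; split; auto. exists delta; split; auto.
      intros x' [Hx' _] Hc' _. apply H; auto.
    - (* away from the sphere, nearby points are off the sphere too *)
      assert (Hpos : 0 < Rabs (N x - 1)) by (apply Rabs_pos_lt; lra).
      exists (Rabs (N x - 1) / (2 * K)). split; [apply Rdiv_lt_0_compat; lra|].
      exists 1. split; [lra|]. intros x' [Hx' _] Hc' E'. exfalso.
      assert (Hl : Rabs (N x' - N x) <= K * (Rabs (N x - 1) / (2 * K))).
      { apply HKl; auto; [left; apply Rdiv_lt_0_compat; lra | intros i Hi; left; auto]. }
      replace (K * (Rabs (N x - 1) / (2 * K))) with (Rabs (N x - 1) / 2) in Hl by (field; lra).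
      rewrite E' in Hl. rewrite Rabs_minus_sym in Hl. lra. }
  exists (c * delta). split; [nra|].
  intros x Hx HNx y Hy HNy. apply (Hunif x); auto.
  - split; auto. intros i Hi. specialize (Hcl x i Hx Hi). rewrite HNx in Hcl.
    apply Rabs_le_inv. apply Rmult_le_reg_l with c; auto. rewrite Rinv_r by lra. lra.
  - intros j Hj. specialize (Hcl y j Hy Hj). apply Rmult_le_reg_l with c; auto. lra.
Qed.
End Radius.

Lemma Rsup_spec E : bound E -> (exists x, E x) -> is_lub E (Rsup E).
Proof.
  intros H1 H2. unfold Rsup. destruct excluded_middle_informative as [H|H]; [|tauto].
  destruct (completeness E _ _); simpl; auto.
Qed.

Lemma Rsup_nonneg E : (forall x, E x -> 0 <= x) -> 0 <= Rsup E.
Proof.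
  intros H. destruct (classic (bound E /\ exists x, E x)) as [[H1 [x Hx]]|H1].
  - destruct (Rsup_spec E H1 (ex_intro _ x Hx)) as [Hu _]. specialize (Hu x Hx). specialize (H x Hx). lra.
  - unfold Rsup. destruct excluded_middle_informative; [tauto|lra].
Qed.

Lemma rootn_nonneg a n : 0 <= rootn a n.
Proof. unfold rootn. destruct Req_EM_T; [lra|]. unfold Rpower. left; apply exp_pos. Qed.

Lemma jsr_nonneg d N As : 0 <= jsr d N As.
Proof.
  unfold jsr, limsup, Rinf. set (E := fun x : R => _).
  assert (Rsup E <= 0); [|lra].
  destruct (classic (bound E /\ exists x, E x)) as [[H1 H2]|H1];
    [|unfold Rsup; destruct excluded_middle_informative; [tauto|lra]].
  apply (Rsup_spec E H1 H2). intros y [n Hy].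
  assert (0 <= - y); [|lra]. rewrite Hy. apply Rsup_nonneg. intros z [k [_ ->]]. apply rootn_nonneg.
Qed.

Definition hull_radii d N As p (v : Vec) : R -> Prop :=
  fun t => 0 <= t /\ forall y, inRd d y -> N y <= t -> in_conv (orbit_pm d As p v) y.

Section Radii.
Variables (d : nat) (N : Vec -> R) (As : list Mat) (p : nat) (HN : is_norm d N).

(* If S(t) lies in the hull of A_p(u) U A_p(-u), then t N(w xs) <= M N(xs)
   whenever M bounds the N(w G u): w maps t xs / N(xs) into the N-ball of radius M. *)
Lemma radius_times_image u w xs M t : inRd d u -> inRd d xs -> 0 < N xs ->
  (forall G, word_of As G -> (length G <= p)%nat -> N (applyw d w (applyw d G u)) <= M) ->
  hull_radii d N As p u t -> t * N (applyw d w xs) <= M * N xs.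
Proof.
  intros Hu Hxs HNxs HM [Ht Hty].
  assert (Hc : 0 <= t / N xs) by (apply Rmult_le_pos; [lra | left; apply Rinv_0_lt_compat; lra]).
  assert (Hin : in_conv (orbit_pm d As p u) (vscal (t / N xs) xs)).
  { apply Hty; [apply inRd_vscal; auto|].
    rewrite (N_scal d N HN), Rabs_right by (auto; lra). right; field; lra. }
  pose proof (hull_bound d As p N HN u w M Hu HM _ Hin) as Hw.
  rewrite applyw_scal, (N_scal d N HN), Rabs_right in Hw by (try apply applyw_inRd; auto; lra).
  apply Rmult_le_reg_r with (/ N xs); [apply Rinv_0_lt_compat; lra|].
  replace (M * N xs * / N xs) with M by (field; lra). unfold Rdiv in Hw. lra.
Qed.

Lemma hull_radii_bounded u : inRd d u -> N u = 1 -> bound (hull_radii d N As p u).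
Proof.
  intros Hu HNu. destruct (words_max As p (fun G => N (applyw d G u))) as [G [_ [_ HG]]].
  exists (N (applyw d G u)). intros t Ht.
  pose proof (radius_times_image u nil u _ t Hu Hu ltac:(lra) HG Ht) as H.
  change (applyw d nil u) with u in H. rewrite HNu in H. lra.
Qed.

Lemma sup_radius_times_image u w xs M : inRd d u -> N u = 1 -> inRd d xs -> 0 < N xs -> 0 <= M ->
  hull_radii d N As p u 0 ->
  (forall G, word_of As G -> (length G <= p)%nat -> N (applyw d w (applyw d G u)) <= M) ->
  Rsup (hull_radii d N As p u) * N (applyw d w xs) <= M * N xs.
Proof.
  intros Hu HNu Hxs HNxs HM H0 HG.
  assert (HA : 0 <= N (applyw d w xs)) by (apply (N_nonneg d N HN), applyw_inRd; auto).
  destruct HA as [HA|HA]; [|rewrite <- HA; nra].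
  destruct (Rsup_spec _ (hull_radii_bounded u Hu HNu) (ex_intro _ 0 H0)) as [_ Hl].
  assert (Rsup (hull_radii d N As p u) <= M * N xs / N (applyw d w xs)).
  { apply Hl. intros t Ht. pose proof (radius_times_image u w xs M t Hu Hxs HNxs HG Ht).
    apply Rmult_le_reg_r with (N (applyw d w xs)); auto.
    replace (M * N xs / N (applyw d w xs) * N (applyw d w xs)) with (M * N xs) by (field; lra). lra. }
  apply Rle_trans with (M * N xs / N (applyw d w xs) * N (applyw d w xs)).
  - apply Rmult_le_compat_r; lra.
  - right; field; lra.
Qed.

Lemma chi_bounds t0 : 0 < t0 -> (exists u, inRd d u /\ N u = 1) ->
  (forall v, inRd d v -> N v = 1 -> hull_radii d N As p v t0) ->
  t0 <= chi d N As p /\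
  forall u, inRd d u -> N u = 1 -> chi d N As p <= Rsup (hull_radii d N As p u).
Proof.
  intros Ht0 [u0 [Hu0 HNu0]] Hunif.
  assert (Hlub : forall v, inRd d v -> N v = 1 -> is_lub (hull_radii d N As p v) (Rsup (hull_radii d N As p v)))
    by (intros v Hv HNv; apply Rsup_spec; [apply hull_radii_bounded | exists t0]; auto).
  assert (Hge : forall v, inRd d v -> N v = 1 -> t0 <= Rsup (hull_radii d N As p v))
    by (intros v Hv HNv; apply (proj1 (Hlub v Hv HNv)), Hunif; auto).
  set (E := fun c => exists x, inRd d x /\ N x = 1 /\ - c = Rsup (hull_radii d N As p x)).
  assert (Hchi : chi d N As p = - Rsup E) by reflexivity. rewrite Hchi.
  assert (HE : forall u, inRd d u -> N u = 1 -> E (- Rsup (hull_radii d N As p u)))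
    by (intros u Hu HNu; exists u; rewrite Ropp_involutive; auto).
  assert (Hbound : forall c, E c -> c <= - t0)
    by (intros c [v [Hv [HNv Hc]]]; specialize (Hge v Hv HNv); lra).
  destruct (Rsup_spec E (ex_intro _ (- t0) Hbound) (ex_intro _ _ (HE u0 Hu0 HNu0))) as [U L].
  split.
  - assert (Rsup E <= - t0) by (apply L; exact Hbound). lra.
  - intros u Hu HNu. assert (- Rsup (hull_radii d N As p u) <= Rsup E) by (apply U, HE; auto). lra.
Qed.
End Radii.

Lemma cancel_chi (mu Rm r chi A M s : R) : 0 < chi -> 0 < s ->
  A >= mu * (Rm / chi) * r * s -> chi * A <= M * s -> mu * Rm * r <= M.
Proof.
  intros Hchi Hs HA HM.
  assert (Hmul : mu * Rm * r * s <= chi * A).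
  { replace (mu * Rm * r * s) with (chi * (mu * (Rm / chi) * r * s)) by (field; lra).
    apply Rmult_le_compat_l; lra. }
  apply Rmult_le_reg_r with s; auto. lra.
Qed.

Lemma power_ineq (mu rho : R) (n p k : nat) : 1 < mu -> 0 <= rho -> (1 <= n)%nat -> (k <= p)%nat ->
  (Rpower mu (/ INR (n + p)) * rho) ^ (k + n) <= mu * Rmax 1 (rho ^ p) * rho ^ n.
Proof.
  intros Hmu Hr Hn Hk. rewrite Rpow_mult_distr, (pow_add rho).
  assert (HnP : 0 < INR (n + p)) by (apply lt_0_INR; lia).
  assert (Heta : 0 <= Rpower mu (/ INR (n + p)) ^ (k + n))
    by (apply pow_le; left; unfold Rpower; apply exp_pos).
  assert (Ha : Rpower mu (/ INR (n + p)) ^ (k + n) <= mu).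
  { rewrite <- Rpower_pow, Rpower_mult by (unfold Rpower; apply exp_pos).
    rewrite <- (Rpower_1 mu) at 2 by lra. apply Rle_Rpower; [lra|].
    apply Rmult_le_reg_l with (INR (n + p)); auto.
    rewrite <- Rmult_assoc, Rinv_r, Rmult_1_l, Rmult_1_r by lra. apply le_INR; lia. }
  assert (Hb : rho ^ k <= Rmax 1 (rho ^ p)).
  { destruct (Rle_dec rho 1).
    - eapply Rle_trans; [|apply Rmax_l]. rewrite <- (pow1 k). apply pow_incr; lra.
    - eapply Rle_trans; [|apply Rmax_r]. apply Rle_pow; lra || lia. }
  assert (0 <= rho ^ k) by (apply pow_le; auto).
  assert (0 <= rho ^ n) by (apply pow_le; auto).
  rewrite <- Rmult_assoc. apply Rmult_le_compat_r; auto.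
  apply Rmult_le_compat; auto.
Qed.

Theorem lemma3 (d : nat) (As : list Mat) (N : Vec -> R) (p n : nat) (mu : R) :
  irreducible d As -> is_norm d N ->
  (d - 1 <= p)%nat -> (1 <= n)%nat -> 1 < mu ->
  (exists (w : list Mat) (xs : Vec),
      word_of As w /\ length w = n /\ inRd d xs /\ ~ vzero xs /\
      N (applyw d w xs) >= mu * eta_p d N As p * jsr d N As ^ n * N xs) ->
  forall x : Vec, inRd d x -> ~ vzero x ->
    exists F : list Mat,
      word_of As F /\ (n <= length F <= n + p)%nat /\
      N (applyw d F x) >=
        (Rpower mu (/ INR (n + p)) * jsr d N As) ^ (length F) * N x.
Proof.
  intros Hirr HN Hp Hn Hmu [w [xs [Hw [Hlw [Hxs [Hxs0 Hhyp]]]]]] x Hx Hx0.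
  destruct (N_normalize d N HN x Hx Hx0) as [Hu [HNu Hxu]]. set (u := vscal (/ N x) x) in *.
  destruct (uniform_radius d As p N Hirr HN Hp) as [t0 [Ht0 Hunif]].
  assert (Hrad : forall v t, inRd d v -> N v = 1 -> 0 <= t <= t0 -> hull_radii d N As p v t)
    by (intros v t Hv HNv Ht; split; [lra | intros y Hy HNy; apply Hunif; auto; lra]).
  destruct (chi_bounds d N As p HN t0 Ht0 (ex_intro _ u (conj Hu HNu)))
    as [Hchi_pos Hchi_le]; [intros v Hv HNv; apply Hrad; auto; lra|].
  destruct (words_max As p (fun G => N (applyw d w (applyw d G u)))) as [G [HGw [HGl HG]]].
  set (M := N (applyw d w (applyw d G u))) in *.
  assert (HM : 0 <= M) by (apply (N_nonneg d N HN), applyw_inRd, applyw_inRd; auto).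
  assert (Hkey : chi d N As p * N (applyw d w xs) <= M * N xs).
  { eapply Rle_trans; [apply Rmult_le_compat_r; [apply (N_nonneg d N HN), applyw_inRd; auto
                                                | apply (Hchi_le u Hu HNu)]|].
    apply sup_radius_times_image; auto; [apply (N_pos d N HN); auto | apply Hrad; auto; lra]. }
  assert (Hgrowth : mu * Rmax 1 (jsr d N As ^ p) * jsr d N As ^ n <= M).
  { apply (cancel_chi mu _ _ (chi d N As p) (N (applyw d w xs)) M (N xs)); auto; [lra|].
    apply (N_pos d N HN); auto. }
  exists (G ++ w). split; [|split].
  - intros B HB. apply in_app_or in HB. destruct HB; auto.
  - rewrite length_app. lia.
  - rewrite length_app, applyw_app, Hxu at 1. rewrite !applyw_scal, (N_scal d N HN) by
      (apply applyw_inRd, applyw_inRd; auto).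
    fold M. rewrite Rabs_right by (left; apply (N_pos d N HN); auto). rewrite Hlw.
    pose proof (power_ineq mu (jsr d N As) n p (length G) Hmu (jsr_nonneg d N As) Hn HGl).
    pose proof (N_pos d N HN x Hx Hx0). apply Rle_ge. rewrite Rmult_comm.
    apply Rmult_le_compat_l; lra.
Qed.
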